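(* Let $n=2^i m$ with $i\geq 1$ and $m\geq 3$ odd. Suppose $f\in\mathbb{F}_{2^m}[x]$ is a 3-divisible Dembowski–Ostrom polynomial which is APN on $\mathbb{F}_{2^n}$. Then $f$ induces an APN permutation of the subfield $\mathbb{F}_{2^m}$.
   Context: A polynomial over $\mathbb{F}_{2^n}$ is Dembowski–Ostrom if it is of the form $\sum_{i\neq j}a_{ij}x^{2^i+2^j}$. It is 3-divisible if $f(x)=f'(x^3)$ for some map $f'$. A map $f$ on $\mathbb{F}_{2^N}$ is APN if for every $a\neq 0$ and every $b$ the equation $f(x+a)+f(x)=b$ has at most 2 solutions in $\mathbb{F}_{2^N}$. *)

From mathcomp Require Import all_boot all_order all_algebra all_field.
Set Implicit Arguments. Unset Strict Implicit. Unset Printing Implicit Defensive.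
Import GRing.Theory.
Local Open Scope ring_scope.

(* The subfield {x | x^(2^m) = x} of a finite field L (it is F_{2^m} when
   L has characteristic 2 and m divides [L : F_2]). *)
Definition subfield_pow2 (L : finFieldType) (m : nat) : {set L} :=
  [set x : L | x ^+ (2 ^ m) == x].

Definition dembowski_ostrom (L : fieldType) (f : {poly L}) : Prop :=
  forall k : nat, f`_k != 0 ->
    exists i j : nat, i <> j /\ k = (2 ^ i + 2 ^ j)%N.

Definition three_divisible (L : fieldType) (f : {poly L}) : Prop :=
  exists f' : L -> L, forall x : L, f.[x] = f' (x ^+ 3).

Definition APN_on (L : finFieldType) (D : {set L}) (f : L -> L) : Prop :=
  forall a b : L, a \in D -> a != 0 -> b \in D ->
    (#|[set x in D | (f (x + a) + f x == b)%R]| <= 2)%N.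

From mathcomp Require Import all_boot all_order all_algebra all_field.
From mathcomp Require fingroup pgroup.
From mathcomp Require Import ring.
Import GRing.Theory.
Local Open Scope ring_scope.

(* Write K = subfield_pow2 L m, the fixed field of x |-> x^(2^m).
   1. In characteristic 2, x |-> x^(2^m) is additive, so K is closed under sums,
      products and quotients; a polynomial with coefficients in K maps K to K.
   2. Since [L : F_2] = 2^i m is even, 3 divides |L| - 1, so L contains a
      primitive cube root of unity w.  As m is odd, w^(2^m) = w^2, hence
      neither w nor w^2 lies in K.
   3. A 3-divisible f satisfies f(wz) = f(z).  If such an APN map has
      f(x) = f(y) with x <> y, then for a = x + y the three points x, wa, w^2 a
      all solve f(z + a) + f(z) = 0; APN forces x = wa or x = w^2 a, i.e.
      x / a is w or w^2.  For x, y in K this contradicts step 2: f is injective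
      on K, hence a permutation of K.
   4. APN on L restricts to APN on any subset, in particular on K. *)

Set Implicit Arguments.
Unset Strict Implicit.

Lemma frobenius_pow2D (L : fieldType) (m : nat) : (2 \in [pchar L])%N ->
  forall x y : L, (x + y) ^+ (2 ^ m) = x ^+ (2 ^ m) + y ^+ (2 ^ m).
Proof.
move=> char2 x y; apply: exprDn_pchar.
by rewrite pnatX (pnatE _ (isT : prime 2)) char2.
Qed.

Lemma horner_subfield_pow2 (L : finFieldType) (m : nat) (p : {poly L}) :
  (2 \in [pchar L])%N -> (forall k : nat, p`_k \in subfield_pow2 L m) ->
  forall x : L, x \in subfield_pow2 L m -> p.[x] \in subfield_pow2 L m.
Proof.
move=> char2 coefK x; rewrite !inE => /eqP xK.
rewrite horner_coef; apply: (big_ind (fun y : L => y ^+ (2 ^ m) == y)).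
- by rewrite expr0n expn_eq0.
- by move=> a b /eqP aK /eqP bK; rewrite frobenius_pow2D // aK bK.
- move=> k _; have /[!inE] /eqP pkK := coefK k.
  by rewrite exprMn exprAC xK pkK.
Qed.

Lemma subfield_pow2_div (L : finFieldType) (m : nat) (x y : L) :
  x \in subfield_pow2 L m -> y \in subfield_pow2 L m ->
  x / y \in subfield_pow2 L m.
Proof. by rewrite !inE expr_div_n => /eqP -> /eqP ->. Qed.

Lemma primitive_cube_root_exists (L : finFieldType) : (3 %| #|L|.-1)%N ->
  exists2 w : L, w ^+ 3 = 1 & w != 1.
Proof.
move=> dvd3.
have [u _ ord_u] := @pgroup.Cauchy _ 3
   (fingroup.setT_group (FinRing.FinRing_unit_of__canonical__fingroup_FinGroup L))
   isT ltac:(by rewrite /= card_finField_unit).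
exists (val u); first by rewrite -FinRing.val_unitX -ord_u fingroup.expg_order.
apply/eqP=> u1; have u_eq1 : u = 1%g by apply: val_inj; rewrite u1.
by move: ord_u; rewrite u_eq1 fingroup.order1.
Qed.

Lemma three_dvd_pow2_even_pred (e : nat) : ~~ odd e -> (3 %| (2 ^ e).-1)%N.
Proof.
move=> even_e; rewrite -[e]odd_double_half (negbTE even_e) add0n -mul2n expnM.
rewrite -subn1 -eqn_mod_dvd ?expn_gt0 //.
by rewrite -modnXm /= exp1n.
Qed.

Lemma pow2_odd_mod3 (e : nat) : odd e -> (2 ^ e %% 3 = 2)%N.
Proof.
move=> odd_e; rewrite -[e]odd_double_half odd_e -mul2n expnS expnM.
by rewrite -modnMmr -modnXm /= exp1n.
Qed.

Lemma cube_root_unity_sum (L : fieldType) (w : L) :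
  w ^+ 3 = 1 -> w != 1 -> w ^+ 2 + w + 1 = 0.
Proof.
move=> w3 w1; have : (w - 1) * (w ^+ 2 + w + 1) = 0.
  have -> : (w - 1) * (w ^+ 2 + w + 1) = w ^+ 3 - 1 by ring.
  by rewrite w3 subrr.
by move/eqP; rewrite mulf_eq0 subr_eq0 (negbTE w1) => /eqP.
Qed.

Lemma cube_root_unity_sqr_neq (L : fieldType) (w : L) :
  w ^+ 3 = 1 -> w != 1 -> w ^+ 2 != w.
Proof.
move=> w3 w1; have w0 : w != 0.
  by apply: contraNneq (oner_neq0 L) => w0; rewrite -w3 w0 expr0n.
by apply: contra w1 => /eqP ww; apply/eqP/(mulfI w0); rewrite mulr1 -expr2.
Qed.

Lemma cube_root_notin_subfield_pow2 (L : finFieldType) (m : nat) (w : L) :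
  odd m -> w ^+ 3 = 1 -> w != 1 ->
  w \notin subfield_pow2 L m /\ w ^+ 2 \notin subfield_pow2 L m.
Proof.
move=> odd_m w3 w1.
have w_frob : w ^+ (2 ^ m) = w ^+ 2.
  by rewrite (divn_eq (2 ^ m) 3) pow2_odd_mod3 // exprD mulnC exprM w3 expr1n mul1r.
have w2_neq_w := cube_root_unity_sqr_neq w3 w1.
rewrite !inE w_frob exprAC w_frob -exprM (exprS w 3) w3 mulr1.
by rewrite w2_neq_w eq_sym w2_neq_w.
Qed.

Lemma APN_on_subset (L : finFieldType) (D E : {set L}) (f : L -> L) :
  E \subset D -> APN_on D f -> APN_on E f.
Proof.
move=> /subsetP subED apnD a b aE a0 bE.
apply: leq_trans (apnD a b (subED a aE) a0 (subED b bE)).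
by apply/subset_leq_card/subsetP => z; rewrite !inE => /andP[/subED -> ->].
Qed.

Lemma APN_cube_invariant_collision (L : finFieldType) (f : L -> L) (w : L) :
  (2 \in [pchar L])%N -> w ^+ 3 = 1 -> w != 1 ->
  (forall z : L, f (w * z) = f z) -> APN_on [set: L] f ->
  forall x y : L, x != y -> f x = f y ->
  x = w * (x + y) \/ x = w ^+ 2 * (x + y).
Proof.
move=> char2 w3 w1 fw apn x y xy fxy; set a := x + y.
have add_self : forall z : L, z + z = 0 by move=> z; apply: addrr_pchar2.
have a0 : a != 0 by rewrite /a addr_eq0 (oppr_pchar2 char2).
have w2 : w ^+ 2 = w + 1.
  by rewrite -[LHS]addr0 -(cube_root_unity_sum w3 w1) !addrA add_self add0r.
have fw2 z : f (w ^+ 2 * z) = f z by rewrite expr2 -mulrA !fw.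
have wa_neq_w2a : w * a != w ^+ 2 * a.
  by rewrite (inj_eq (mulIf a0)) eq_sym cube_root_unity_sqr_neq.
pose S := [set z in [set: L] | f (z + a) + f z == 0].
have x_in : x \in S by rewrite !inE /= /a addrA add_self add0r fxy add_self.
have wa_in : w * a \in S.
  by rewrite !inE /= fw -{2}[a]mul1r -mulrDl -w2 fw2 add_self.
have w2a_in : w ^+ 2 * a \in S.
  by rewrite !inE /= fw2 -{2}[a]mul1r -mulrDl w2 -addrA add_self addr0 fw add_self.
have cardS : (#|S| <= 2)%N := apn a 0 (in_setT a) a0 (in_setT 0).
have [|x_wa] := eqVneq x (w * a); first by left.
have [|x_w2a] := eqVneq x (w ^+ 2 * a); first by right.
suff : (3 <= #|S|)%N by rewrite leqNgt ltnS cardS.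
have sub3 : x |: (w * a |: [set w ^+ 2 * a]) \subset S.
  by rewrite !subUset !sub1set x_in wa_in w2a_in.
apply: leq_trans (subset_leq_card sub3).
by rewrite !cardsU1 cards1 !inE (negbTE wa_neq_w2a) (negbTE x_wa) (negbTE x_w2a).
Qed.

Unset Implicit Arguments.

Theorem theorem5p1 (L : finFieldType) (i m : nat) :
  (2 \in [pchar L])%N ->
  #|L| = (2 ^ (2 ^ i * m))%N ->
  (1 <= i)%N -> (3 <= m)%N -> odd m ->
  forall f : {poly L},
    (forall k : nat, f`_k \in subfield_pow2 L m) ->
    dembowski_ostrom f ->
    three_divisible f ->
    APN_on [set: L] (fun x => f.[x]) ->
    [/\ (forall x : L, x \in subfield_pow2 L m -> f.[x] \in subfield_pow2 L m),
        {in subfield_pow2 L m &, injective (fun x : L => f.[x])}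
      & APN_on (subfield_pow2 L m) (fun x => f.[x])].
Proof.
move=> char2 cardL i_gt0 _ odd_m f coefK _ [f' f_cube] apn.
split; last by apply: APN_on_subset apn; apply: subsetT.
  exact: horner_subfield_pow2.
have [w w3 w1] : exists2 w : L, w ^+ 3 = 1 & w != 1.
  apply: primitive_cube_root_exists; rewrite cardL; apply: three_dvd_pow2_even_pred.
  by rewrite oddM oddX orbF eqn0Ngt i_gt0.
have fw z : f.[w * z] = f.[z] by rewrite !f_cube exprMn w3 mul1r.
have [wK w2K] := cube_root_notin_subfield_pow2 odd_m w3 w1.
move=> x y xK yK fxy; apply/eqP/negPn/negP => xy.
have xyK : x + y \in subfield_pow2 L m.
  by move: xK yK; rewrite !inE frobenius_pow2D // => /eqP -> /eqP ->.
have xy0 : x + y != 0 by rewrite addr_eq0 (oppr_pchar2 char2).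
have ratioK := subfield_pow2_div xK xyK.
have [x_eq | x_eq] := APN_cube_invariant_collision char2 w3 w1 fw apn xy fxy.
- by move: ratioK; rewrite {1}x_eq mulfK // => /(negP wK).
- by move: ratioK; rewrite {1}x_eq mulfK // => /(negP w2K).
Qed.
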